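(* Let $d\ge 1$, $T\ge 1$, let $\mathcal{X}\subseteq\mathbb{R}^d$ be a non-empty closed convex set containing $\mathbf{0}$ with finite diameter $D=\max_{x,y\in\mathcal{X}}\|x-y\|$, and let $0<\mu\le L$. Let $f_1,\dots,f_T:\mathcal{X}\to[0,\infty)$ be differentiable functions such that, for every $t$ and all $x,y\in\mathcal{X}$, $\frac{\mu}{2}\|y-x\|^2\le f_t(y)-f_t(x)-\langle\nabla f_t(x),y-x\rangle\le\frac{L}{2}\|y-x\|^2$, and such that there is a finite constant $G$ with $\max_{x\in\mathcal{X}}\|\nabla f_t(x)\|=G$ for all $t$. Let $x_0=\mathbf{0}$. Then the OMGD algorithm with $K=\lceil\frac{L+\mu}{2\mu}\ln4\rceil$ satisfies $$C_{\mathcal{A}_o}-C_{\mathsf{OPT}}\le\Big(2G+D\Big(10-\frac{\mu}{2(\mu+4)}\Big)\Big)(\|x_1^\star\|+\mathcal{P}_T^\star).$$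
   Context: $x_t^\star=\arg\min_{x\in\mathcal{X}}f_t(x)$, $\mathcal{P}_T^\star=\sum_{t=2}^T\|x_t^\star-x_{t-1}^\star\|$. Quadratic-switching cost of $(y_1,\dots,y_T)\in\mathcal{X}^T$ with $y_0=x_0$: $\sum_{t=1}^T\big(f_t(y_t)+\frac12\|y_t-y_{t-1}\|^2\big)$; $C_{\mathsf{OPT}}$ is its minimum over $\mathcal{X}^T$. OMGD with parameter $K$: $x_1=x_0$; for $t=2,\dots,T$, $z_t^{(0)}=x_{t-1}$, $z_t^{(k)}=\Pi_{\mathcal{X}}\big(z_t^{(k-1)}-\frac1L\nabla f_{t-1}(z_t^{(k-1)})\big)$ ($k=1,\dots,K$), $x_t=z_t^{(K)}$, where $\Pi_{\mathcal{X}}$ is Euclidean projection onto $\mathcal{X}$. $C_{\mathcal{A}_o}$ is the quadratic-switching cost of $(x_1,\dots,x_T)$. *)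

From HB Require Import structures.
From mathcomp Require Import all_boot all_order all_algebra.
From mathcomp Require Import all_classical all_reals all_analysis.
Set Implicit Arguments. Unset Strict Implicit. Unset Printing Implicit Defensive.
Import Order.TTheory GRing.Theory Num.Theory.
Import numFieldNormedType.Exports.
Local Open Scope classical_set_scope.
Local Open Scope ring_scope.

Section Defs.
Variables (R : realType) (d : nat).
Notation vec := 'rV[R]_d.

(* Euclidean inner product and Euclidean norm on R^d
   (the library norm on 'rV is the sup norm, so we define these explicitly). *)
Definition dotv (u v : vec) : R := \sum_(i < d) u ord0 i * v ord0 i.
Definition enorm (u : vec) : R := Num.sqrt (dotv u u).

Definition grad (f : vec -> R) (x : vec) : vec :=
  \row_(i < d) ('D_(delta_mx ord0 i : vec) f x).

Definition is_proj (X : set vec) (x y : vec) : Prop :=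
  X y /\ forall w, X w -> enorm (x - y) <= enorm (x - w).

Definition qs_cost (f : nat -> vec -> R) (x0 : vec) (T : nat) (y : nat -> vec) : R :=
  \sum_(1 <= t < T.+1)
     (f t (y t) + 2^-1 * enorm (y t - (if t == 1%N then x0 else y t.-1)) ^+ 2).

Definition omgd_traj (X : set vec) (f : nat -> vec -> R) (L : R) (K : nat)
    (x0 : vec) (T : nat) (x : nat -> vec) : Prop :=
  x 1%N = x0 /\
  forall t, (2 <= t <= T)%N ->
    exists z : nat -> vec,
      [/\ z 0%N = x t.-1,
          (forall k, (k < K)%N ->
             is_proj X (z k - L^-1 *: grad (f t.-1) (z k)) (z k.+1))
        & x t = z K].

Definition path_len (xs : nat -> vec) (T : nat) : R :=
  \sum_(2 <= t < T.+1) enorm (xs t - xs t.-1).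

End Defs.

From HB Require Import structures.
From mathcomp Require Import all_boot all_order all_algebra.
From mathcomp Require Import all_classical all_reals all_analysis.
From mathcomp Require Import ring lra.
Import Order.TTheory GRing.Theory Num.Theory.
Import numFieldNormedType.Exports.
Local Open Scope classical_set_scope.
Local Open Scope ring_scope.

(* One step contracts the squared distance to the minimizer
   x*_t by (L - mu)/(L + mu), so by the choice of K the round halves the
   distance: |x_(t+1) - x*_t| <= |x_t - x*_t| / 2.  With e_t = |x_t - x*_t| the
   triangle inequality gives e_(t+1) <= e_t / 2 + |x*_(t+1) - x*_t|, hence
   sum_t e_t <= 2 (|x*_1| + P_T).  Round t costs at most G e_t above f_t(x*_t)
   (convexity and the gradient bound) plus a switching cost
   |x_(t+1) - x_t|^2 / 2 <= (3/4) D e_t, while C_OPT >= sum_t f_t(x*_t).  This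
   yields the bound with the smaller constant 2 G + 3 D / 2. *)

Set Implicit Arguments. Unset Strict Implicit.

Section Euclid.
Variables (R : realType) (d : nat).
Implicit Types (a : R) (u v w : 'rV[R]_d).

Lemma dotvC u v : dotv u v = dotv v u.
Proof. by apply: eq_bigr => i _; rewrite mulrC. Qed.

Lemma dotvDl u v w : dotv (u + v) w = dotv u w + dotv v w.
Proof. by rewrite /dotv -big_split; apply: eq_bigr => i _; rewrite !mxE mulrDl. Qed.

Lemma dotvZl a u w : dotv (a *: u) w = a * dotv u w.
Proof. by rewrite /dotv mulr_sumr; apply: eq_bigr => i _; rewrite !mxE mulrA. Qed.

Lemma dotvNl u w : dotv (- u) w = - dotv u w.
Proof. by rewrite -scaleN1r dotvZl mulN1r. Qed.

Lemma dotvBl u v w : dotv (u - v) w = dotv u w - dotv v w.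
Proof. by rewrite dotvDl dotvNl. Qed.

Lemma dotvDr u v w : dotv w (u + v) = dotv w u + dotv w v.
Proof. by rewrite dotvC dotvDl !(dotvC w). Qed.

Lemma dotvZr a u w : dotv w (a *: u) = a * dotv w u.
Proof. by rewrite dotvC dotvZl dotvC. Qed.

Lemma dotvNr u w : dotv w (- u) = - dotv w u.
Proof. by rewrite dotvC dotvNl dotvC. Qed.

Lemma dotvBr u v w : dotv w (u - v) = dotv w u - dotv w v.
Proof. by rewrite dotvDr dotvNr. Qed.

Lemma dotv_ge0 u : 0 <= dotv u u.
Proof. by apply: sumr_ge0 => i _; rewrite -expr2 sqr_ge0. Qed.

Lemma dotv_eq0l u v : dotv u u = 0 -> dotv u v = 0.
Proof.
move=> /psumr_eq0P uu0; apply: big1 => i _.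
have /eqP : u ord0 i ^+ 2 = 0 by rewrite expr2 uu0 // => j _; rewrite -expr2 sqr_ge0.
by rewrite sqrf_eq0 => /eqP ->; rewrite mul0r.
Qed.

Lemma enorm_ge0 u : 0 <= enorm u.
Proof. exact: sqrtr_ge0. Qed.

Lemma enorm_sqr u : enorm u ^+ 2 = dotv u u.
Proof. by rewrite sqr_sqrtr // dotv_ge0. Qed.

Lemma enorm_leE u v : (enorm u <= enorm v) = (dotv u u <= dotv v v).
Proof. by rewrite ler_sqrt // dotv_ge0. Qed.

Lemma enormZ a u : enorm (a *: u) = `|a| * enorm u.
Proof. by rewrite /enorm dotvZl dotvZr mulrA -expr2 sqrtrM ?sqr_ge0 // sqrtr_sqr. Qed.

Lemma enorm0 : enorm (0 : 'rV[R]_d) = 0.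
Proof. by rewrite -(scale0r 0) enormZ normr0 mul0r. Qed.

Lemma enorm_distrC u v : enorm (u - v) = enorm (v - u).
Proof. by rewrite -opprB -scaleN1r enormZ normrN1 mul1r. Qed.

(* Expanding |(|v|) u - (|u|) v|^2 >= 0 gives |u| |v| (|u| |v| - u.v) >= 0. *)
Lemma dotv_le_enorm u v : dotv u v <= enorm u * enorm v.
Proof.
have := dotv_ge0 (enorm v *: u - enorm u *: v).
rewrite !(dotvBl, dotvBr, dotvZl, dotvZr) (dotvC v u) -!enorm_sqr => h.
have [uv0|uv_gt0] := eqVneq (enorm u * enorm v) 0.
  rewrite uv0; move/eqP: uv0; rewrite mulf_eq0 => /orP[] /eqP n0.
    by rewrite dotv_eq0l // -enorm_sqr n0 expr0n.
  by rewrite dotvC dotv_eq0l // -enorm_sqr n0 expr0n.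
have uv_pos : 0 < enorm u * enorm v.
  by rewrite lt_def uv_gt0 mulr_ge0 ?enorm_ge0.
rewrite -subr_ge0 -(pmulr_rge0 _ uv_pos); nra.
Qed.

Lemma enormD_le u v : enorm (u + v) <= enorm u + enorm v.
Proof.
rewrite -(ler_pXn2r (_ : (0 < 2)%N)) ?nnegrE ?addr_ge0 ?enorm_ge0 //.
rewrite enorm_sqr dotvDl !dotvDr (dotvC v u) sqrrD -!enorm_sqr.
have := dotv_le_enorm u v; lra.
Qed.
End Euclid.

Lemma convex_set_segment (R : numDomainType) (M : lmodType R) (X : set M) u v s :
  convex_set X -> X u -> X v -> 0 <= s -> s <= 1 -> X (u + s *: (v - u)).
Proof.
move=> convX Xu Xv s0 s1.
have := convX v u (Itv01 s0 s1); rewrite !inE => /(_ Xv Xu).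
congr X; change (s *: v + (1 - s) *: u = u + s *: (v - u)).
by rewrite scalerBr scalerBl scale1r addrCA.
Qed.

Lemma le0_of_linear_le_quadratic (R : realFieldType) (a b : R) :
  (forall s, 0 < s -> s <= 1 -> s * a <= s ^+ 2 * b) -> a <= 0.
Proof.
move=> small; rewrite leNgt; apply/negP => a_gt0.
have a_le_b : a <= b by have := small 1 ltr01 (lexx 1); rewrite expr1n !mul1r.
have ab_gt0 : 0 < a + b by rewrite addr_gt0 // (lt_le_trans a_gt0).
have s_gt0 : 0 < a / (a + b) by rewrite divr_gt0.
have s_le1 : a / (a + b) <= 1.
  by rewrite ler_pdivrMr // mul1r lerDl (le_trans (ltW a_gt0)).
have := small _ s_gt0 s_le1; rewrite expr2 -mulrA ler_pM2l // mulrAC ler_pdivlMr //.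
nra.
Qed.

Section ProjectedGradient.
Variables (R : realType) (d : nat) (X : set 'rV[R]_d).
Hypothesis convX : convex_set X.
Implicit Types u v w z : 'rV[R]_d.

Lemma is_proj_dotv_le0 z p w : is_proj X z p -> X w -> dotv (z - p) (w - p) <= 0.
Proof.
move=> [Xp p_min] Xw.
apply: (@le0_of_linear_le_quadratic _ _ (dotv (w - p) (w - p) / 2)) => s s0 s1.
have := p_min _ (convex_set_segment convX Xp Xw (ltW s0) s1).
rewrite enorm_leE opprD addrA.
move: (z - p) (w - p) => a b.
rewrite !(dotvBl, dotvBr, dotvZl, dotvZr) (dotvC b a); lra.
Qed.

Lemma minimizer_dotv_ge0 (f : 'rV[R]_d -> R) g xs w (L : R) :
  X xs -> (forall u, X u -> f xs <= f u) ->
  (forall v, X v -> f v - f xs - dotv g (v - xs) <= L / 2 * enorm (v - xs) ^+ 2) ->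
  X w -> 0 <= dotv g (w - xs).
Proof.
move=> Xxs xs_min smooth Xw; rewrite -oppr_le0.
apply: (@le0_of_linear_le_quadratic _ _ (L / 2 * dotv (w - xs) (w - xs))) => s s0 s1.
have Xq := convex_set_segment convX Xxs Xw (ltW s0) s1.
have := smooth _ Xq; have := xs_min _ Xq.
have -> : xs + s *: (w - xs) - xs = s *: (w - xs) by rewrite addrC addKr.
rewrite enorm_sqr !(dotvZl, dotvZr); lra.
Qed.

Variables (f : 'rV[R]_d -> R) (mu L : R).
Hypotheses (mu_gt0 : 0 < mu) (mu_le_L : mu <= L).
Hypothesis sandwich : forall u v, X u -> X v ->
  mu / 2 * enorm (v - u) ^+ 2 <= f v - f u - dotv (grad f u) (v - u)
  /\ f v - f u - dotv (grad f u) (v - u) <= L / 2 * enorm (v - u) ^+ 2.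
Variable xs : 'rV[R]_d.
Hypotheses (Xxs : X xs) (xs_min : forall u, X u -> f xs <= f u).

Lemma pgd_step_contract x xp : X x -> is_proj X (x - L^-1 *: grad f x) xp ->
  (L + mu) * dotv (xp - xs) (xp - xs) <= (L - mu) * dotv (x - xs) (x - xs).
Proof.
move=> Xx proj_xp; have Xxp := proj_xp.1.
have L_gt0 : 0 < L by exact: lt_le_trans mu_le_L.
have vi := is_proj_dotv_le0 proj_xp Xxs.
have opt := minimizer_dotv_ge0 Xxs xs_min (fun v Xv => (sandwich Xxs Xv).2) Xxp.
have [strong_x _] := sandwich Xx Xxs.
have [_ smooth_x] := sandwich Xx Xxp.
have [strong_xs _] := sandwich Xxs Xxp.
have e1 : xs - x = - (x - xs) by rewrite opprB.
have e2 : xp - x = (xp - xs) - (x - xs) by rewrite opprB addrA subrK.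
have e3 : x - L^-1 *: grad f x - xp = ((x - xs) - (xp - xs)) - L^-1 *: grad f x.
  by rewrite opprB addrA subrK addrAC.
rewrite e1 enorm_sqr in strong_x; rewrite e2 enorm_sqr in smooth_x.
rewrite enorm_sqr in strong_xs; rewrite e3 -[xs - xp]opprB in vi.
move: strong_x smooth_x strong_xs opt vi.
move: (x - xs) (xp - xs) (grad f x) => a b g.
rewrite !(dotvNl, dotvNr, dotvBl, dotvBr, dotvZl, dotvZr) (dotvC b a) => ? ? ? ? vi.
have : 0 <= L * (dotv a b - dotv b b - L^-1 * dotv g b) by apply: mulr_ge0; lra.
rewrite !mulrBr mulrA mulfV ?gt_eqF // mul1r; lra.
Qed.

Lemma pgd_iter_contract (z : nat -> 'rV[R]_d) (K : nat) : X (z 0%N) ->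
  (forall k, (k < K)%N -> is_proj X (z k - L^-1 *: grad f (z k)) (z k.+1)) ->
  forall k, (k <= K)%N -> X (z k) /\
    dotv (z k - xs) (z k - xs) <= ((L - mu) / (L + mu)) ^+ k * dotv (z 0%N - xs) (z 0%N - xs).
Proof.
move=> Xz0 step; elim=> [|k IH] k_lt; first by rewrite expr0 mul1r.
have [Xzk zk_le] := IH (ltnW k_lt).
have LDmu_gt0 : 0 < L + mu by rewrite addr_gt0 // (lt_le_trans mu_gt0).
have q_ge0 : 0 <= (L - mu) / (L + mu) by rewrite divr_ge0 ?subr_ge0 // ltW.
split; first exact: (step k k_lt).1.
apply: le_trans (_ : (L - mu) / (L + mu) * dotv (z k - xs) (z k - xs) <= _).
  by rewrite mulrAC ler_pdivlMr // mulrC; apply: pgd_step_contract (step k k_lt).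
by rewrite exprS -(mulrA ((L - mu) / (L + mu))) ler_wpM2l.
Qed.

End ProjectedGradient.

Lemma exprB1_le_expR (R : realType) (c : R) n : c <= 1 ->
  (1 - c) ^+ n <= expR (- (n%:R * c)).
Proof.
move=> c_le1; rewrite -mulrN expRM_natl.
apply: lerXn2r; rewrite ?nnegrE ?subr_ge0 ?expR_ge0 //.
by have := expR_ge1Dx (- c).
Qed.

Lemma contraction_pow_le_quarter (R : realType) (mu L : R) (K : nat) :
  0 < mu -> mu <= L -> (L + mu) / (2 * mu) * ln 4 <= K%:R ->
  ((L - mu) / (L + mu)) ^+ K <= 4^-1.
Proof.
move=> mu_gt0 mu_le_L K_ge.
have LDmu_gt0 : 0 < L + mu by lra.
set c := 2 * mu / (L + mu).
have -> : (L - mu) / (L + mu) = 1 - c by rewrite /c; field; rewrite gt_eqF.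
have c_le1 : c <= 1 by rewrite /c ler_pdivrMr // mul1r; lra.
have c_ge0 : 0 <= c by rewrite /c divr_ge0 //; lra.
have ln4_le : ln 4 <= K%:R * c.
  have <- : (L + mu) / (2 * mu) * ln 4 * c = ln 4.
    by rewrite /c; field; rewrite !gt_eqF.
  exact: ler_wpM2r.
apply: le_trans (exprB1_le_expR K c_le1) _.
apply: le_trans (_ : expR (- ln 4) <= _); first by rewrite ler_expR lerN2.
by rewrite expRN lnK // posrE.
Qed.

Lemma sum_halving_le (R : realFieldType) (e p : nat -> R) n : (1 <= n)%N ->
  (forall t, (1 <= t < n)%N -> e t.+1 <= e t / 2 + p t.+1) ->
  \sum_(1 <= t < n.+1) e t + e n <= 2 * (e 1%N + \sum_(2 <= t < n.+1) p t).
Proof.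
elim: n => [//|[|n] IH] _ step; first by rewrite big_nat1 big_geq //; lra.
rewrite big_nat_recr //= [in leRHS]big_nat_recr //=.
have step' : forall t, (1 <= t < n.+1)%N -> e t.+1 <= e t / 2 + p t.+1.
  by move=> t /andP[t1 tn]; apply: step; rewrite t1 ltnW.
have := IH erefl step'; have := step n.+1 (ltnSn _); lra.
Qed.

Lemma sum_lag_le (R : realFieldType) (w e : nat -> R) (a b : R) n : (1 <= n)%N ->
  w 1%N <= a * e 1%N ->
  (forall t, (1 <= t < n)%N -> w t.+1 <= a * e t.+1 + b * e t) ->
  \sum_(1 <= t < n.+1) w t + b * e n <= (a + b) * \sum_(1 <= t < n.+1) e t.
Proof.
move=> + w1; elim: n => [//|[|n] IH] _ step; first by rewrite !big_nat1; lra.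
rewrite big_nat_recr //= [in leRHS]big_nat_recr //=.
have step' : forall t, (1 <= t < n.+1)%N -> w t.+1 <= a * e t.+1 + b * e t.
  by move=> t /andP[t1 tn]; apply: step; rewrite t1 ltnW.
have := IH erefl step'; have := step n.+1 (ltnSn _); rewrite !mulrDl; lra.
Qed.

Lemma subgradient_gap_le (R : realType) d (f : 'rV[R]_d -> R) g u v :
  0 <= f v - f u - dotv g (v - u) -> f u - f v <= enorm g * enorm (u - v).
Proof.
have := dotv_le_enorm g (u - v).
by rewrite -[v - u]opprB dotvNr; lra.
Qed.

Lemma sum_min_le_qs_cost (R : realType) d (X : set 'rV[R]_d) (f : nat -> 'rV[R]_d -> R)
    (xs y : nat -> 'rV[R]_d) x0 T :
  (forall t, (1 <= t <= T)%N -> forall u, X u -> f t (xs t) <= f t u) ->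
  (forall t, (1 <= t <= T)%N -> X (y t)) ->
  \sum_(1 <= t < T.+1) f t (xs t) <= qs_cost f x0 T y.
Proof.
move=> xs_min Xy; rewrite /qs_cost big_nat_cond [leRHS]big_nat_cond.
apply: ler_sum => t /andP[/andP[t1 tT] _].
have tT' : (1 <= t <= T)%N by rewrite t1 -ltnS.
have := xs_min t tT' _ (Xy t tT').
have : 0 <= 2^-1 * enorm (y t - (if t == 1%N then x0 else y t.-1)) ^+ 2.
  by rewrite mulr_ge0 ?sqr_ge0 ?invr_ge0.
lra.
Qed.

Section OMGD.
Variables (R : realType) (d T K : nat) (X : set 'rV[R]_d).
Variables (f : nat -> 'rV[R]_d -> R) (mu L G D : R) (xs x : nat -> 'rV[R]_d).
Hypotheses (convX : convex_set X) (X0 : X 0) (mu_gt0 : 0 < mu) (mu_le_L : mu <= L).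
Hypothesis diam : forall u v, X u -> X v -> enorm (u - v) <= D.
Hypothesis sandwich : forall t, (1 <= t <= T)%N -> forall u v, X u -> X v ->
  mu / 2 * enorm (v - u) ^+ 2 <= f t v - f t u - dotv (grad (f t) u) (v - u)
  /\ f t v - f t u - dotv (grad (f t) u) (v - u) <= L / 2 * enorm (v - u) ^+ 2.
Hypothesis grad_le : forall t, (1 <= t <= T)%N -> forall u, X u -> enorm (grad (f t) u) <= G.
Hypothesis xs_min : forall t, (1 <= t <= T)%N -> X (xs t) /\ forall u, X u -> f t (xs t) <= f t u.
Hypothesis rateK : ((L - mu) / (L + mu)) ^+ K <= 4^-1.
Hypothesis traj : omgd_traj X f L K 0 T x.

Local Notation dist t := (enorm (x t - xs t)).

Lemma omgd_step t : (1 <= t < T)%N -> X (x t) ->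
  X (x t.+1) /\ enorm (x t.+1 - xs t) <= 2^-1 * dist t.
Proof.
move=> /andP[t1 tT] Xxt; have tT' : (1 <= t <= T)%N by rewrite t1 ltnW.
have tT2 : (2 <= t.+1 <= T)%N by rewrite ltnS t1.
have [z [z0 zstep ->]] := traj.2 t.+1 tT2.
have [Xxs xs_opt] := xs_min tT'.
have Xz0 : X (z 0%N) by rewrite z0.
have [XzK] := pgd_iter_contract convX mu_gt0 mu_le_L (sandwich tT') Xxs xs_opt Xz0 zstep (leqnn K).
rewrite z0 /= => zK_le; split=> //.
rewrite -[2^-1]ger0_norm ?invr_ge0 // -enormZ enorm_leE dotvZl dotvZr mulrA.
apply: le_trans zK_le _; apply: ler_wpM2r; first exact: dotv_ge0.
by rewrite -invfM -natrM.
Qed.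

Lemma omgd_in_domain t : (1 <= t <= T)%N -> X (x t).
Proof.
elim: t => [//|[|t] IH] /andP[_ tT]; first by rewrite traj.1.
exact: (omgd_step (t := t.+1) tT (IH (ltnW tT))).1.
Qed.

Lemma omgd_halving t : (1 <= t < T)%N -> enorm (x t.+1 - xs t) <= 2^-1 * dist t.
Proof.
move=> htT; apply: (omgd_step htT _).2; apply: omgd_in_domain.
by case/andP: htT => -> /ltnW.
Qed.

Lemma omgd_tracking t : (1 <= t < T)%N -> dist t.+1 <= dist t / 2 + enorm (xs t.+1 - xs t).
Proof.
move=> htT; have := omgd_halving htT.
have -> : x t.+1 - xs t.+1 = (x t.+1 - xs t) + (xs t - xs t.+1) by rewrite addrA subrK.
have := enormD_le (x t.+1 - xs t) (xs t - xs t.+1).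
rewrite (enorm_distrC (xs t)); lra.
Qed.

Lemma omgd_switch_le t : (1 <= t < T)%N -> enorm (x t.+1 - x t) <= 3 / 2 * dist t.
Proof.
move=> htT; have := omgd_halving htT.
have -> : x t.+1 - x t = (x t.+1 - xs t) + (xs t - x t) by rewrite addrA subrK.
have := enormD_le (x t.+1 - xs t) (xs t - x t).
rewrite (enorm_distrC (xs t)); lra.
Qed.

Lemma omgd_gap_le t : (1 <= t <= T)%N -> f t (x t) - f t (xs t) <= G * dist t.
Proof.
move=> ht; have Xxt := omgd_in_domain ht; have [Xxs _] := xs_min ht.
have [strong _] := sandwich ht Xxt Xxs.
have strong_ge0 : 0 <= mu / 2 * enorm (xs t - x t) ^+ 2.
  by rewrite mulr_ge0 ?sqr_ge0 // divr_ge0 ?ltW.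
apply: le_trans (subgradient_gap_le (le_trans strong_ge0 strong)) _.
by rewrite ler_wpM2r ?enorm_ge0 ?grad_le.
Qed.

Lemma omgd_round_excess_le t : (1 <= t < T)%N ->
  f t.+1 (x t.+1) + 2^-1 * enorm (x t.+1 - x t) ^+ 2 - f t.+1 (xs t.+1)
  <= G * dist t.+1 + 3 / 4 * D * dist t.
Proof.
move=> htT; have /andP[t1 tT] := htT.
have ht : (1 <= t <= T)%N by rewrite t1 ltnW.
have := omgd_gap_le (tT : (1 <= t.+1 <= T)%N); have := omgd_switch_le htT.
have := diam (omgd_in_domain (tT : (1 <= t.+1 <= T)%N)) (omgd_in_domain ht).
have := enorm_ge0 (x t.+1 - x t); have := enorm_ge0 (x t - xs t).
rewrite expr2; nra.
Qed.

Lemma omgd_excess_le : (1 <= T)%N ->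
  qs_cost f 0 T x - \sum_(1 <= t < T.+1) f t (xs t)
  <= (2 * G + 3 / 2 * D) * (enorm (xs 1%N) + path_len xs T).
Proof.
move=> T1; have [x1 _] := traj.
have D_ge0 : 0 <= D := le_trans (enorm_ge0 _) (diam X0 X0).
have G_ge0 : 0 <= G := le_trans (enorm_ge0 _) (@grad_le 1%N T1 0 X0).
have dist1 : dist 1%N = enorm (xs 1%N) by rewrite x1 enorm_distrC subr0.
pose excess t := f t (x t) + 2^-1 * enorm (x t - (if t == 1%N then 0 else x t.-1)) ^+ 2
  - f t (xs t).
have excess1 : excess 1%N <= G * dist 1%N.
  rewrite /excess eqxx x1 subr0 enorm0 expr2 !mul0r mulr0 addr0 -x1.
  exact: (omgd_gap_le (t := 1%N) T1).
have excessS t : (1 <= t < T)%N -> excess t.+1 <= G * dist t.+1 + 3 / 4 * D * dist t.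
  by case: t => [//|t]; exact: omgd_round_excess_le.
have cost := sum_lag_le T1 excess1 excessS.
have track := sum_halving_le (e := fun t => dist t) (p := fun t => enorm (xs t - xs t.-1))
  T1 omgd_tracking.
rewrite /qs_cost -sumrB -/excess -dist1 /path_len.
have := enorm_ge0 (x T - xs T).
nra.
Qed.

End OMGD.

Unset Implicit Arguments. Set Strict Implicit.

Theorem corollary1 (R : realType) (d T : nat) (X : set 'rV[R]_d)
  (D mu L G : R) (f : nat -> 'rV[R]_d -> R) (K : nat)
  (xs : nat -> 'rV[R]_d) (x : nat -> 'rV[R]_d) (copt : R) :
  (1 <= d)%N -> (1 <= T)%N ->
  closed X -> @convex_set R 'rV[R]_d X -> X 0 ->
  (forall u v, X u -> X v -> enorm (u - v) <= D) ->
  (exists u v, [/\ X u, X v & enorm (u - v) = D]) ->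
  0 < mu -> mu <= L ->
  (forall t, (1 <= t <= T)%N -> forall u, X u -> differentiable (f t) u) ->
  (forall t, (1 <= t <= T)%N -> forall u, X u -> 0 <= f t u) ->
  (forall t, (1 <= t <= T)%N -> forall u v, X u -> X v ->
     mu / 2 * enorm (v - u) ^+ 2 <= f t v - f t u - dotv (grad (f t) u) (v - u)
     /\ f t v - f t u - dotv (grad (f t) u) (v - u) <= L / 2 * enorm (v - u) ^+ 2) ->
  (forall t, (1 <= t <= T)%N ->
     (forall u, X u -> enorm (grad (f t) u) <= G) /\
     exists u, X u /\ enorm (grad (f t) u) = G) ->
  (* xs t is the minimizer x_t^* of f_t over X *)
  (forall t, (1 <= t <= T)%N -> X (xs t) /\ forall u, X u -> f t (xs t) <= f t u) ->
  (* copt = C_OPT is the minimum of the quadratic-switching cost over X^T *)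
  (exists y : nat -> 'rV[R]_d,
     (forall t, (1 <= t <= T)%N -> X (y t)) /\ qs_cost f 0 T y = copt) ->
  (forall y : nat -> 'rV[R]_d,
     (forall t, (1 <= t <= T)%N -> X (y t)) -> copt <= qs_cost f 0 T y) ->
  (K : int) = Num.ceil ((L + mu) / (2 * mu) * ln 4) ->
  omgd_traj X f L K 0 T x ->
  qs_cost f 0 T x - copt <=
    (2 * G + D * (10 - mu / (2 * (mu + 4)))) * (enorm (xs 1%N) + path_len xs T).
Proof.
move=> _ T1 _ convX X0 diam _ mu_gt0 mu_le_L _ _ sandwich grad_G xs_min [y [Xy <-]] _ K_def traj.
have K_ge : (L + mu) / (2 * mu) * ln 4 <= K%:R.
  by have := ceil_ge ((L + mu) / (2 * mu) * ln 4); rewrite -K_def.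
have rateK := contraction_pow_le_quarter mu_gt0 mu_le_L K_ge.
have excess := omgd_excess_le convX X0 mu_gt0 mu_le_L diam sandwich
  (fun t ht => (grad_G t ht).1) xs_min rateK traj T1.
have lower := sum_min_le_qs_cost 0 (fun t ht => (xs_min t ht).2) Xy.
have D_ge0 : 0 <= D := le_trans (enorm_ge0 _) (diam _ _ X0 X0).
have path_ge0 : 0 <= enorm (xs 1%N) + path_len xs T.
  by rewrite addr_ge0 ?enorm_ge0 ?sumr_ge0 // => t _; exact: enorm_ge0.
have const_le : 2 * G + 3 / 2 * D <= 2 * G + D * (10 - mu / (2 * (mu + 4))).
  have : mu / (2 * (mu + 4)) <= 1 by rewrite ler_pdivrMr ?mul1r; lra.
  by move=> ?; rewrite lerD2l [leLHS]mulrC ler_wpM2l //; lra.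
apply: le_trans (ler_wpM2r path_ge0 const_le); lra.
Qed.
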